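(* Let $V$ be a vector space over $\mathrm{GF}(2)$ of finite dimension at least $3$. Then there exists a trilinear form $g:V^3\to\mathrm{GF}(2)$ such that for every $0\ne x\in V$ the induced bilinear form $g(x,-,-):V^2\to\mathrm{GF}(2)$ is not symmetric. *)

From HB Require Import structures.
From mathcomp Require Import all_boot all_order all_algebra.
Set Implicit Arguments. Unset Strict Implicit. Unset Printing Implicit Defensive.
Import GRing.Theory.
Local Open Scope ring_scope.

Definition trilinear (R : comNzRingType) (V : lmodType R) (g : V -> V -> V -> R) : Prop :=
  (forall (a : R) (x x' y z : V), g (a *: x + x') y z = a * g x y z + g x' y z) /\
  (forall (a : R) (x y y' z : V), g x (a *: y + y') z = a * g x y z + g x y' z) /\
  (forall (a : R) (x y z z' : V), g x y (a *: z + z') = a * g x y z + g x y z').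

Definition sym_slice (R : comNzRingType) (V : lmodType R) (g : V -> V -> V -> R) (x : V) : Prop :=
  forall y z : V, g x y z = g x z y.

From HB Require Import structures.
From mathcomp Require Import all_boot all_order all_algebra.
Import GRing.Theory.
Local Open Scope ring_scope.

(* Fix a basis e_0, ..., e_(n-1) of V with coordinates x_i, and
   read the indices cyclically modulo n.  The "cyclic form"
       g(x, y, z) = sum_i x_i * y_i * z_(i+1)
   is trilinear, being a sum of products of linear coordinate functionals.
   On basis vectors, g(x, e_j, e_k) = x_j if k = j+1 and 0 otherwise.  Given
   x != 0, pick j with x_j != 0: then g(x, e_j, e_(j+1)) = x_j, whereas
   g(x, e_(j+1), e_j) = 0 because j+2 != j modulo n as soon as n >= 3.  Hence
   the slice g(x,-,-) is not symmetric. *)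

(* Two cyclic steps never return to the start when there are at least three
   indices; this is where the hypothesis dim V >= 3 is used. *)
Lemma ordSS_neq (n : nat) (i : 'I_n) : (3 <= n)%N -> ordS (ordS i) != i.
Proof.
move=> n_ge3; apply/eqP => /(congr1 val) /=.
rewrite -addn1 modnDml addSnnS -[X in _ = X](modn_small (ltn_ord i)).
rewrite -[X in _ = (X %% n)%N]addn0 => /eqP; rewrite eqn_modDl mod0n => /eqP two_mod_n.
have /dvdn_leq : (n %| 2)%N by rewrite /dvdn two_mod_n.
by move/(_ isT); rewrite leqNgt (leq_trans _ n_ge3).
Qed.

Section CyclicForm.

Variables (F : fieldType) (V : vectType F).

Let n := \dim (fullv : {vspace V}).
Let e := vbasis (fullv : {vspace V}).

Definition crd (i : 'I_n) (v : V) : F := coord e i v.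

Definition cyclic_form (x y z : V) : F :=
  \sum_(i < n) crd i x * crd i y * crd (ordS i) z.

Lemma crdP (i : 'I_n) (a : F) (u v : V) : crd i (a *: u + v) = a * crd i u + crd i v.
Proof. exact: linearP. Qed.

Lemma crd_basis (i j : 'I_n) : crd i e`_j = (j == i)%:R.
Proof. by apply: coord_free; apply: basis_free; apply: vbasisP. Qed.

Lemma cyclic_form_trilinear : trilinear cyclic_form.
Proof.
split; [|split] => a x y y' z; rewrite /cyclic_form mulr_sumr -big_split /=;
  apply: eq_bigr => i _; rewrite crdP.
- by rewrite !mulrDl !mulrA.
- by rewrite mulrDr mulrDl (mulrCA _ a) !mulrA.
- by rewrite mulrDr (mulrCA _ a) !mulrA.
Qed.

Lemma cyclic_form_basis (x : V) (j k : 'I_n) :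
  cyclic_form x e`_j e`_k = (k == ordS j)%:R * crd j x.
Proof.
rewrite /cyclic_form (bigD1 j) //= big1 => [|i /negPf ji].
  by rewrite !crd_basis eqxx addr0 mulr1 mulrC.
by rewrite crd_basis eq_sym ji mulr0 mul0r.
Qed.

Lemma exists_crd_neq0 (x : V) : x != 0 -> exists j : 'I_n, crd j x != 0.
Proof.
move=> x_neq0; apply/existsP; apply: contraNT x_neq0 => /existsPn crd0.
rewrite (coord_vbasis (memvf x)) big1 // => i _.
by move/negPn/eqP: (crd0 i) => crd_i0; rewrite -[coord _ _ _]/(crd i x) crd_i0 scale0r.
Qed.

Lemma cyclic_form_not_sym (x : V) :
  (3 <= n)%N -> x != 0 -> ~ sym_slice cyclic_form x.
Proof.
move=> n_ge3 /exists_crd_neq0 [j crd_j] /(_ e`_j e`_(ordS j)).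
rewrite !cyclic_form_basis eqxx [j == _]eq_sym (negPf (ordSS_neq _ j n_ge3)) mul1r mul0r.
by move/eqP; rewrite (negPf crd_j).
Qed.

End CyclicForm.

Theorem lemma4p4 (V : vectType 'F_2) (hV : (3 <= \dim (fullv : {vspace V}))%N) :
  exists g : V -> V -> V -> 'F_2,
    trilinear g /\ (forall x : V, x != 0 -> ~ sym_slice g x).
Proof.
exists (@cyclic_form _ V); split; first exact: cyclic_form_trilinear.
by move=> x; apply: cyclic_form_not_sym.
Qed.
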